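(* Let $X$ be a graph (multiple edges and loops allowed) which is connected, has countable vertex set, has bounded degree, and has no vertex of degree one. Fix a vertex $x_0\in VX$. For $x\in VX$ and $m\ge 1$ let $c_m(x)$ be the number of geodesic loops of length $m$ starting at $x$, and let $N_m(x_0)$ be the number of closed geodesic paths of length $m$ starting at $x_0$. Define formal power series $C(u:x)=\sum_{m=1}^\infty c_m(x)u^m$ for $x\in VX$ and $N(u:x_0)=\sum_{m=1}^\infty N_m(x_0)u^m$, and set (coefficientwise) $(\Delta_X C(u:\cdot))(x_0)=\deg(x_0)C(u:x_0)-\sum_{e\in E_{x_0}}C(u:t(e))$. Then, as formal power series in $u$, $$N(u:x_0)=(1-u^2)^{-2}\{1-(\deg(x_0)-\Delta_X)u^2+(\deg(x_0)-1)u^4\}C(u:\cdot)(x_0),$$ that is, $$N(u:x_0)=(1-u^2)^{-2}\Big[\big(1-\deg(x_0)u^2+(\deg(x_0)-1)u^4\big)C(u:x_0)+u^2(\Delta_X C(u:\cdot))(x_0)\Big].$$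
   Context: A graph $X=(VX,EX)$ consists of disjoint sets $VX$, $EX$ with maps $e\mapsto (o(e),t(e))\in VX\times VX$ and $e\mapsto\bar e$ such that $\bar e\ne e$, $\bar{\bar e}=e$, $o(e)=t(\bar e)$. For $x\in VX$, $E_x=\{e\in EX: o(e)=x\}$ and $\deg(x)=|E_x|$; bounded degree means $\sup_x\deg(x)<\infty$. A path of length $n$ is a sequence of edges $c=(e_1,\dots,e_n)$ with $t(e_i)=o(e_{i+1})$; $o(c)=o(e_1)$, $t(c)=t(e_n)$; it is closed if $o(c)=t(c)$. It has a back-tracking if $e_{i+1}=\bar e_i$ for some $i$, and has a tail if $e_n=\bar e_1$. A geodesic loop is a closed path without back-tracking; a closed geodesic path is a geodesic loop without tail. ''Starting at $x$'' means $o(c)=x$. *)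

From HB Require Import structures.
From mathcomp Require Import all_boot all_order all_algebra.
Set Implicit Arguments. Unset Strict Implicit. Unset Printing Implicit Defensive.
Import Order.TTheory GRing.Theory Num.Theory.

(* A (Serre) graph X = (VX, EX, o, t, bar) in which every vertex has finitely
   many outgoing edges; [star x] is a duplicate-free list of E_x = {e | o e = x}.
   Loops and multiple edges are allowed. *)
Record graph := Graph {
  vert : countType;
  edge : eqType;
  org : edge -> vert;
  ter : edge -> vert;
  rev : edge -> edge;
  star : vert -> seq edge;
  rev_neq : forall e, rev e != e;
  revK : forall e, rev (rev e) = e;
  org_rev : forall e, org e = ter (rev e);
  star_uniq : forall x, uniq (star x);
  star_mem : forall x e, (e \in star x) = (org e == x)
}.

Section Paths.
Variable X : graph.
Local Notation V := (vert X).
Local Notation E := (edge X).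

Definition deg (x : V) : nat := size (star x).

Fixpoint walks (m : nat) (x : V) : seq (seq E) :=
  match m with
  | 0 => [:: [::]]
  | m'.+1 => flatten [seq [seq e :: p | p <- walks m' (ter e)] | e <- star x]
  end.

Definition term (x : V) (p : seq E) : V := last x (map (@ter X) p).

Fixpoint no_backtrack (p : seq E) : bool :=
  match p with
  | e1 :: ((e2 :: _) as q) => (e2 != rev e1) && no_backtrack q
  | _ => true
  end.

Definition has_tail (p : seq E) : bool :=
  match p with
  | e1 :: _ => last e1 p == rev e1
  | [::] => false
  end.

Definition geodesic_loop (x : V) (p : seq E) : bool :=
  (term x p == x) && no_backtrack p.

Definition closed_geodesic (x : V) (p : seq E) : bool :=
  geodesic_loop x p && ~~ has_tail p.

Definition c_num (m : nat) (x : V) : nat := count (geodesic_loop x) (walks m x).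
Definition N_num (m : nat) (x : V) : nat := count (closed_geodesic x) (walks m x).

Definition connected : Prop :=
  forall x y : V, exists m, exists2 p, p \in walks m x & term x p = y.

Definition bounded_degree : Prop := exists D, forall x : V, deg x <= D.

End Paths.

Definition fps := nat -> int.
Local Open Scope ring_scope.
Definition fps_add (a b : fps) : fps := fun n => a n + b n.
Definition fps_mul (a b : fps) : fps :=
  fun n => \sum_(i < n.+1) a i * b (n - i)%N.
(* polynomial given by its list of coefficients (constant term first) *)
Definition fps_poly (s : seq int) : fps := fun n => nth 0 s n.

Definition Cser (X : graph) (x : vert X) : fps :=
  fun n => if n == 0%N then 0 else (c_num n x)%:Z.
Definition Nser (X : graph) (x : vert X) : fps :=
  fun n => if n == 0%N then 0 else (N_num n x)%:Z.

Definition DeltaC (X : graph) (x : vert X) : fps :=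
  fun n => (deg x)%:Z * Cser x n - \sum_(e <- star x) Cser (ter e) n.

From mathcomp Require Import all_boot all_order all_algebra zify.
Set Implicit Arguments. Unset Strict Implicit. Unset Printing Implicit Defensive.

(* Sort the geodesic loops q of length k at the far ends t(e), e in E_x, by whether q
   begins with the reverse of e and whether it ends with e.  Those doing neither are
   exactly the q for which e q (rev e) is a geodesic loop with tail at x, so they count
   c_{k+2}(x) - N_{k+2}(x).  Those doing exactly one of the two are rotations of closed
   geodesic paths of length k at x, so each kind counts N_k(x).  Those doing both are
   (rev e) s e for a geodesic loop s of length k-2 at x, and e can then be chosen in
   deg x - 1 or deg x - 2 ways according as s has a tail or not, which gives
   (deg x - 1) c_{k-2}(x) - N_{k-2}(x).  Summing over E_x yields the coefficient of
   u^{k+2} of the identity multiplied by (1 - u^2)^2. *)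

Lemma count_sum (T : Type) (P : pred T) (s : seq T) : count P s = \sum_(y <- s) P y.
Proof. by rewrite -sum1_count big_mkcond. Qed.

Lemma sum_neq2 (T : eqType) (s : seq T) (a b : T) :
  uniq s -> a \in s -> b \in s ->
  \sum_(y <- s) ((y != a) && (y != b)) + (a != b) + 1 = size s.
Proof.
move=> s_uniq sa sb.
have count1 y : y \in s -> count (pred1 y) s = 1.
  by move=> ys; rewrite (count_uniq_mem y s_uniq) ys.
have countI : count (predI (pred1 a) (pred1 b)) s = (a == b).
  case: eqVneq => [<-|ab].
    by rewrite /= -(count1 a sa); apply: eq_count => y /=; rewrite andbb.
  apply/eqP; rewrite -leqn0 leqNgt -has_count.
  by apply/hasP => -[y _ /andP [/eqP -> /eqP]]; apply/eqP.
have countUI := count_predUI (pred1 a) (pred1 b) s.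
have countC := count_predC (predU (pred1 a) (pred1 b)) s.
rewrite -count_sum (@eq_count _ _ (predC (predU (pred1 a) (pred1 b)))); last first.
  by move=> y /=; rewrite negb_or.
rewrite count1 // count1 // countI in countUI.
by case: eqVneq countI countUI => _ /= _; lia.
Qed.

Section GeodesicLoops.
Variable X : graph.
Local Notation V := (vert X).
Local Notation E := (edge X).
Implicit Types (x y : V) (e f : E) (p q r s : seq E).

Lemma rev_inj : injective (@rev X).
Proof. exact: (can_inj (@revK X)). Qed.

Lemma org_revE e : org (rev e) = ter e.
Proof. by rewrite org_rev revK. Qed.

Lemma ter_revE e : ter (rev e) = org e.
Proof. by rewrite org_rev. Qed.

Lemma eq_rev_sym e f : (e == rev f) = (f == rev e).
Proof. by rewrite -(inj_eq rev_inj) revK eq_sym. Qed.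

Lemma eq_rev_id e : (e == rev e) = false.
Proof. by rewrite eq_sym (negbTE (rev_neq e)). Qed.

Lemma no_backtrack_cons e q :
  no_backtrack (e :: q) = (head e q != rev e) && no_backtrack q.
Proof. by case: q => [|f q] /=; rewrite ?eq_rev_id. Qed.

Lemma no_backtrack_rcons q f :
  no_backtrack (rcons q f) = no_backtrack q && (f != rev (last f q)).
Proof.
elim: q => [|e q IHq]; first by rewrite /= eq_rev_id.
rewrite rcons_cons !no_backtrack_cons IHq.
by case: q {IHq} => [|g q] /=; rewrite ?eq_rev_id ?andbA //= andbT.
Qed.

Lemma term_cons x e q : term x (e :: q) = term (ter e) q.
Proof. by []. Qed.

Lemma term_rcons x q f : term x (rcons q f) = ter f.
Proof. by rewrite /term map_rcons last_rcons. Qed.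

Lemma term_last x e q : term x (e :: q) = ter (last e q).
Proof. by rewrite /term /= last_map. Qed.

Lemma size_walks m x p : p \in walks m x -> size p = m.
Proof.
elim: m x p => [|m IHm] x p /=; first by rewrite inE => /eqP ->.
by case/flattenP=> _ /mapP [e _ ->] /mapP [q /IHm q_size ->] /=; rewrite q_size.
Qed.

Lemma org_walks m x e q : e :: q \in walks m x -> org e = x.
Proof.
case: m => [|m] /=; first by rewrite inE.
by case/flattenP=> _ /mapP [f f_star ->] /mapP [_ _ [-> _]]; apply/eqP; rewrite -star_mem.
Qed.

Lemma big_walksS_cons (F : seq E -> nat) m x :
  \sum_(p <- walks m.+1 x) F p =
  \sum_(e <- star x) \sum_(q <- walks m (ter e)) F (e :: q).
Proof. by rewrite big_flatten big_map; apply: eq_bigr => e _; rewrite big_map. Qed.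

Lemma big_walksS_rcons (F : seq E -> nat) m x :
  \sum_(p <- walks m.+1 x) F p =
  \sum_(p <- walks m x) \sum_(f <- star (term x p)) F (rcons p f).
Proof.
elim: m x F => [|m IHm] x F.
  by rewrite big_walksS_cons big_seq1; apply: eq_bigr => e _; rewrite big_seq1.
by rewrite !big_walksS_cons; apply: eq_bigr => e _; rewrite IHm.
Qed.

Lemma sum_star_supp1 y a (F : E -> nat) :
  (forall f, f != a -> F f = 0) -> \sum_(f <- star y) F f = (org a == y) * F a.
Proof.
move=> F_supp; rewrite (bigID (pred1 a)) /= [X in _ + X]big1 ?addn0 //.
case: (boolP (org a == y)) => a_org.
  by rewrite -big_filter filter_pred1_uniq ?star_uniq ?star_mem // big_seq1 mul1n.
by rewrite mul0n big1_seq // => f /andP [/eqP -> ]; rewrite star_mem (negbTE a_org).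
Qed.

Lemma sum_star_ter_rev x y (P : pred E) :
  \sum_(e <- star x) ((ter e == y) && P e) =
  \sum_(f <- star y) ((ter f == x) && P (rev f)).
Proof.
have sum_filter x' y' (F : pred E) :
    \sum_(e <- star x') ((ter e == y') && F e) =
    \sum_(e <- [seq e <- star x' | ter e == y']) F e.
  by rewrite big_filter [RHS]big_mkcond; apply: eq_bigr => e _; case: eqP.
rewrite !sum_filter -(big_map (@rev X) xpredT (fun e => nat_of_bool (P e))); apply: perm_big.
apply: uniq_perm; first by rewrite filter_uniq ?star_uniq.
  by rewrite (map_inj_uniq rev_inj) filter_uniq ?star_uniq.
move=> e; rewrite -[e in RHS]revK (mem_map rev_inj) !mem_filter !star_mem.
by rewrite org_revE ter_revE andbC.
Qed.

(* Both are false on the empty path, because e != rev e. *)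
Definition starts_with_rev e q := head e q == rev e.
Definition ends_with e q := last (rev e) q == e.

Definition neighbour_loops x k (P : E -> pred (seq E)) : nat :=
  \sum_(e <- star x) \sum_(q <- walks k (ter e)) (geodesic_loop (ter e) q && P e q).

Lemma sum_c_num_neighbours x k :
  \sum_(e <- star x) c_num k (ter e) =
    neighbour_loops x k (fun e q => ~~ starts_with_rev e q && ~~ ends_with e q)
  + neighbour_loops x k (fun e q => starts_with_rev e q && ~~ ends_with e q)
  + neighbour_loops x k (fun e q => ~~ starts_with_rev e q && ends_with e q)
  + neighbour_loops x k (fun e q => starts_with_rev e q && ends_with e q).
Proof.
rewrite /neighbour_loops -!big_split; apply: eq_bigr => e _.
rewrite /c_num count_sum -!big_split; apply: eq_bigr => q _ /=.
by case: geodesic_loop; case: starts_with_rev; case: ends_with.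
Qed.

Lemma tail_loop_cons_rcons e q f :
  q != [::] ->
  geodesic_loop (org e) (e :: rcons q f) && has_tail (e :: rcons q f) =
  (f == rev e) && [&& no_backtrack q, ~~ starts_with_rev e q & ~~ ends_with e q].
Proof.
move=> q_nil; rewrite [has_tail _]/= last_rcons.
case: (eqVneq f (rev e)) => [-> | _]; last by rewrite andbF.
rewrite andbT /geodesic_loop term_cons term_rcons ter_revE eqxx.
rewrite no_backtrack_cons no_backtrack_rcons /starts_with_rev /ends_with (inj_eq rev_inj).
case: q q_nil => [|g q] //= _; rewrite [e == _]eq_sym.
by case: (g == rev e); case: (last g q == e); rewrite ?andbT ?andbF.
Qed.

Lemma closed_geodesic_rcons x r f :
  (ter f == x) && (no_backtrack (f :: r) && ~~ ends_with (rev f) (f :: r)) =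
  closed_geodesic x (rcons r f).
Proof.
rewrite /closed_geodesic /geodesic_loop term_rcons no_backtrack_rcons no_backtrack_cons.
rewrite /ends_with revK; case: r => [|h r]; first by rewrite /= eq_rev_id /= !andbT.
move: (no_backtrack (h :: r)) => b /=.
rewrite last_rcons (eq_rev_sym f (last h r)) (eq_rev_sym f h).
by case: (ter f == x); case: (h == rev f); case: (last h r == rev f); case: b.
Qed.

Lemma closed_geodesic_cons e r :
  (org e == term (ter e) r) && geodesic_loop (ter e) (rcons r e) &&
     ~~ starts_with_rev e (rcons r e) =
  closed_geodesic (org e) (e :: r).
Proof.
rewrite /closed_geodesic /geodesic_loop term_rcons eqxx no_backtrack_rcons.
rewrite term_cons no_backtrack_cons /starts_with_rev /has_tail /= [org e == _]eq_sym.
have -> : head e (rcons r e) = head e r by case: r.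
rewrite (eq_rev_sym e (last e r)).
by case: (term _ r == org e); case: (head e r == rev e); case: (last e r == rev e);
  rewrite ?andbT ?andbF.
Qed.

Lemma no_double_backtrack_short e q :
  size q <= 2 -> ~~ (no_backtrack q && starts_with_rev e q && ends_with e q).
Proof.
rewrite /starts_with_rev /ends_with.
case: q => [|a [|b [|c q]]] //= _; first by rewrite eq_rev_id.
  by case: eqP => // ->; rewrite (negbTE (rev_neq e)).
by apply/negP => /andP [/andP [/andP [ba _] /eqP ae] /eqP be]; rewrite ae be revK eqxx in ba.
Qed.

Lemma neighbour_loops_tail x k :
  neighbour_loops x k.+1 (fun e q => ~~ starts_with_rev e q && ~~ ends_with e q)
  + N_num k.+3 x = c_num k.+3 x.
Proof.
have -> : c_num k.+3 x =
    \sum_(p <- walks k.+3 x) (geodesic_loop x p && has_tail p) + N_num k.+3 x.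
  rewrite /c_num /N_num !count_sum -big_split; apply: eq_bigr => p _ /=.
  by rewrite /closed_geodesic; case: geodesic_loop; case: has_tail.
congr (_ + _); rewrite big_walksS_cons /neighbour_loops.
apply: eq_big_seq => e.
rewrite star_mem => /eqP <-; rewrite [RHS]big_walksS_rcons; apply: eq_big_seq => q q_walk.
have q_nil : q != [::] by rewrite -size_eq0 (size_walks q_walk).
rewrite (@sum_star_supp1 _ (rev e)) => [|f f_rev]; last first.
  by rewrite tail_loop_cons_rcons // (negbTE f_rev).
by rewrite tail_loop_cons_rcons // eqxx org_revE mulnb /geodesic_loop eq_sym -!andbA.
Qed.

Lemma neighbour_loops_starts x k :
  neighbour_loops x k.+1 (fun e q => starts_with_rev e q && ~~ ends_with e q) = N_num k.+1 x.
Proof.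
have first_edge_rev e : e \in star x ->
    \sum_(q <- walks k.+1 (ter e))
      (geodesic_loop (ter e) q && (starts_with_rev e q && ~~ ends_with e q)) =
    \sum_(r <- walks k x)
      ((ter e == term x r) && (no_backtrack (rev e :: r) && ~~ ends_with e (rev e :: r))).
  rewrite star_mem => /eqP e_org.
  rewrite big_walksS_cons (@sum_star_supp1 _ (rev e)) => [|g g_rev]; last first.
    by rewrite big1 // => r _; rewrite /starts_with_rev /= (negbTE g_rev) andbF.
  rewrite org_revE eqxx mul1n ter_revE e_org; apply: eq_bigr => r _.
  rewrite /geodesic_loop term_cons ter_revE e_org /starts_with_rev [head _ _]/= eqxx /=.
  by rewrite [term x r == _]eq_sym andbA.
rewrite /neighbour_loops (eq_big_seq _ first_edge_rev) exchange_big.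
rewrite /N_num count_sum big_walksS_rcons; apply: eq_bigr => r _.
by rewrite sum_star_ter_rev; apply: eq_bigr => f _; rewrite revK closed_geodesic_rcons.
Qed.

Lemma neighbour_loops_ends x k :
  neighbour_loops x k.+1 (fun e q => ~~ starts_with_rev e q && ends_with e q) = N_num k.+1 x.
Proof.
rewrite /N_num count_sum big_walksS_cons /neighbour_loops; apply: eq_big_seq => e.
rewrite star_mem => /eqP <-; rewrite [LHS]big_walksS_rcons; apply: eq_bigr => r _.
rewrite (@sum_star_supp1 _ e) => [|g g_e]; last first.
  by rewrite /ends_with last_rcons (negbTE g_e) !andbF.
by rewrite /ends_with last_rcons eqxx andbT -closed_geodesic_cons mulnb andbA.
Qed.

Lemma neighbour_loops_both_short x k :
  k <= 2 -> neighbour_loops x k (fun e q => starts_with_rev e q && ends_with e q) = 0.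
Proof.
move=> k_le2; rewrite /neighbour_loops big1 // => e _.
rewrite big1_seq // => q /andP [_ q_walk].
have q_size : size q <= 2 by rewrite (size_walks q_walk).
apply/eqP; rewrite eqb0; apply: contra (no_double_backtrack_short e q_size).
by case/andP=> /andP [_ ->].
Qed.

Lemma sum_star_wrap_no_backtrack x h t :
  org h = x ->
  \sum_(e <- star x) ((term x (h :: t) == x) && no_backtrack (rev e :: rcons (h :: t) e))
  + closed_geodesic x (h :: t) + geodesic_loop x (h :: t) = deg x * geodesic_loop x (h :: t).
Proof.
move=> h_org; rewrite /closed_geodesic /geodesic_loop.
case: (eqVneq (term x (h :: t)) x) => [s_closed | _]; last by rewrite big1 ?muln0.
have nb_e e : no_backtrack (rev e :: rcons (h :: t) e) =
    no_backtrack (h :: t) && ((e != h) && (e != rev (last h t))).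
  rewrite no_backtrack_cons no_backtrack_rcons revK [head _ _]/= [last e _]/= eq_sym.
  by case: (e != h); rewrite ?andbT ?andbF.
under eq_bigr do rewrite nb_e.
case: (no_backtrack (h :: t)); last by rewrite big1 ?muln0.
rewrite /= muln1 /deg -(@sum_neq2 _ _ h (rev (last h t))) ?star_uniq ?star_mem ?h_org //.
  by rewrite /has_tail -eq_rev_sym.
by rewrite org_revE -(term_last x) s_closed.
Qed.

Lemma neighbour_loops_both x m :
  neighbour_loops x m.+3 (fun e q => starts_with_rev e q && ends_with e q)
  + N_num m.+1 x + c_num m.+1 x = deg x * c_num m.+1 x.
Proof.
have reduce e : e \in star x ->
    \sum_(q <- walks m.+3 (ter e))
      (geodesic_loop (ter e) q && (starts_with_rev e q && ends_with e q)) =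
    \sum_(s <- walks m.+1 x) ((term x s == x) && no_backtrack (rev e :: rcons s e)).
  rewrite star_mem => /eqP e_org.
  rewrite big_walksS_cons (@sum_star_supp1 _ (rev e)) => [|g g_rev]; last first.
    by rewrite big1 // => q _; rewrite /starts_with_rev /= (negbTE g_rev) andbF.
  rewrite org_revE eqxx mul1n ter_revE e_org big_walksS_rcons; apply: eq_bigr => s _.
  rewrite (@sum_star_supp1 _ e) => [|f f_e]; last first.
    by rewrite /ends_with last_cons last_rcons (negbTE f_e) !andbF.
  rewrite /geodesic_loop /starts_with_rev /ends_with term_cons term_rcons last_cons last_rcons.
  by rewrite e_org mulnb eq_sym !eqxx !andbT.
rewrite /neighbour_loops (eq_big_seq _ reduce) exchange_big /N_num /c_num !count_sum.
rewrite big_distrr -!big_split; apply: eq_big_seq => -[|h t] s_walk.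
  by have := size_walks s_walk.
exact: sum_star_wrap_no_backtrack (org_walks s_walk).
Qed.

Lemma no_tail_short p : no_backtrack p -> size p <= 2 -> ~~ has_tail p.
Proof. by case: p => [|a [|b [|c p]]] //=; rewrite ?eq_rev_id ?andbT. Qed.

Lemma N_num_short k x : k <= 2 -> N_num k x = c_num k x.
Proof.
move=> k_le2; apply: eq_in_count => p p_walk.
rewrite /closed_geodesic /geodesic_loop; case: no_backtrack (@no_tail_short p) => /=.
  by rewrite (size_walks p_walk) andbT => /(_ isT k_le2) ->; rewrite andbT.
by rewrite !andbF.
Qed.

Lemma geodesic_loop_recurrence x k :
  \sum_(e <- star x) c_num k.+1 (ter e) + N_num k.+3 x =
  c_num k.+3 x + 2 * N_num k.+1 x
  + neighbour_loops x k.+1 (fun e q => starts_with_rev e q && ends_with e q).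
Proof.
rewrite sum_c_num_neighbours -neighbour_loops_tail neighbour_loops_starts neighbour_loops_ends.
lia.
Qed.

End GeodesicLoops.

Import GRing.Theory.
Local Open Scope ring_scope.

Lemma neighbour_loops_both_coef (X : graph) (x : vert X) k :
  (neighbour_loops x k.+1 (fun e q => starts_with_rev e q && ends_with e q))%:Z =
  ((deg x)%:Z - 1) * Cser x k.-1 - Nser x k.-1.
Proof.
case: k => [|[|m]]; rewrite /Cser /Nser /=.
- by rewrite neighbour_loops_both_short // mulr0 subr0.
- by rewrite neighbour_loops_both_short // mulr0 subr0.
- have := neighbour_loops_both x m; lia.
Qed.

Lemma Nser_recurrence (X : graph) (x : vert X) n :
  Nser x n - 2 * Nser x (n - 2)%N + Nser x (n - 4)%N =
  Cser x n + ((deg x)%:Z - 1) * Cser x (n - 4)%N - \sum_(e <- star x) Cser (ter e) (n - 2)%N.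
Proof.
case: n => [|[|[|k]]]; last first.
  rewrite !subSS subn0 subn1.
  have := neighbour_loops_both_coef x k; have := geodesic_loop_recurrence x k.
  rewrite /Nser /Cser /= -(big_morph Posz PoszD (erefl 0%:Z)); lia.
all: rewrite /Nser /Cser ?subSS ?sub0n ?subnn /= big1 // ?N_num_short //; lia.
Qed.

Lemma fps_mul_poly (s : seq int) (a : fps) n :
  a 0%N = 0 -> fps_mul (fps_poly s) a n = \sum_(0 <= i < size s) s`_i * a (n - i)%N.
Proof.
move=> a0; pose F i := s`_i * a (n - i)%N; pose N := maxn n.+1 (size s).
have widen m : (m <= N)%N -> (forall i, (m <= i)%N -> F i = 0) ->
    \sum_(0 <= i < m) F i = \sum_(0 <= i < N) F i.
  move=> m_le F0; rewrite [RHS](big_cat_nat (n := m)) //= [X in _ + X]big_nat_cond.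
  by rewrite [X in _ + X]big1 ?addr0 // => i /andP [/andP [/F0 ? _] _].
rewrite /fps_mul /fps_poly -(big_mkord xpredT F) widen ?leq_maxl // => [|i n_lt_i]; last first.
  by rewrite /F (_ : n - i = 0)%N ?a0 ?mulr0 //; apply/eqP; rewrite subn_eq0 ltnW.
by rewrite widen ?leq_maxr // => i s_le_i; rewrite /F nth_default ?mul0r.
Qed.

Theorem theorem3p1 (X : graph) (x0 : vert X) :
  connected X -> bounded_degree X -> (forall x : vert X, deg x <> 1%N) ->
  forall n : nat,
    fps_mul (fps_poly [:: 1; 0; -2; 0; 1]) (Nser x0) n =
    fps_add
      (fps_mul (fps_poly [:: 1; 0; - (deg x0)%:Z; 0; (deg x0)%:Z - 1])
               (Cser x0))
      (fps_mul (fps_poly [:: 0; 0; 1]) (DeltaC x0)) n.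
Proof.
move=> _ _ _ n.
have DeltaC0 : DeltaC x0 0 = 0 by rewrite /DeltaC big1 // mulr0 subr0.
rewrite /fps_add !fps_mul_poly // unlock /= /DeltaC subn0.
have := Nser_recurrence x0 n; lia.
Qed.
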